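(* Let $G$ be a finite simple graph, let $t<0$ and $k>0$ be integers, and write $k=i-mt$ with integers $m\ge 0$ and $1\le i\le -t$. Consider the following procedure: set $H:=G$; for $j=0,1,\ldots,m$ (in this order), let $H$ be replaced by the subgraph of $H$ induced by those vertices whose degree in the current graph $H$ is at least $i-jt$ (i.e., all vertices of degree smaller than $i-jt$ in $H$ are deleted simultaneously); output the final $H$. Let $G_0\ge G_1\ge G_2\ge\cdots$ be the maximal D-chain of order $t$ of $G$ (with $G_r=\emptyset$ for $r$ larger than its length). Then the output $H$ equals $G_k$.
   Context: All graphs are finite, without loops or multiple edges. For graphs $H,G$ write $H\le G$ if $H$ is a subgraph of $G$, and $H<G$ if $H\le G$ and $H\ne G$. Let $t$ be an integer. A D-chain of order $t$ of $G$ is a chain $L\colon G_0\ge G_1\ge\cdots\ge G_k$ of nonempty subgraphs of $G$ with $G_0=G$, where $G_i$ is a vertex-induced subgraph of $G_{i-1}$ for $1\le i\le k$, such that for every $0\le i\le k$, every vertex $v$ of $G_i$ has at least $i$ neighbors in $G_j$, where $j=\max\{0,i+t\}$. The number $k$ is the length of the chain. A D-chain $L\colon G_0\ge\cdots\ge G_k$ of order $t$ is maximal if (i) there is no D-chain of order $t$ of $G$ of length greater than $k$, and (ii) there is no D-chain $L'\colon G'_0\ge\cdots\ge G'_k$ of order $t$ of $G$ with $G_i<G'_i$ for some $1\le i\le k$. For $t\le 0$ the maximal D-chain of order $t$ exists and is unique. *)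

From HB Require Import structures.
From mathcomp Require Import all_boot all_order all_algebra.
Set Implicit Arguments. Unset Strict Implicit. Unset Printing Implicit Defensive.
Import Order.TTheory GRing.Theory Num.Theory.

(* A finite simple graph is a symmetric irreflexive relation e on a finType T.
   Vertex-induced subgraphs of G are represented by their vertex sets
   {set T}; for induced subgraphs of G, "subgraph" is set inclusion. *)

Definition nbrs (T : finType) (e : rel T) (A : {set T}) (v : T) : nat :=
  #|[set u in A | e v u]|.

Definition didx (t : int) (i : nat) : nat := absz (Num.max 0%R (i%:Z + t)%R).

Definition Dchain (T : finType) (e : rel T) (t : int) (len : nat)
    (c : nat -> {set T}) : Prop :=
  [/\ c 0 = [set: T],
      (forall i, 1 <= i <= len -> c i \subset c i.-1),
      (forall i, i <= len -> c i != set0) &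
      (forall i, i <= len -> forall v, v \in c i ->
          i <= nbrs e (c (didx t i)) v)].

Definition maximal_Dchain (T : finType) (e : rel T) (t : int) (len : nat)
    (c : nat -> {set T}) : Prop :=
  [/\ Dchain e t len c,
      (forall len' c', Dchain e t len' c' -> len' <= len) &
      (forall c', Dchain e t len c' ->
          ~ (exists i, (1 <= i <= len) /\ c i \proper c' i))].

Definition chain_at (T : finType) (len : nat) (c : nat -> {set T}) (r : nat)
  : {set T} := if r <= len then c r else set0.

Definition peel_step (T : finType) (e : rel T) (d : int) (H : {set T})
  : {set T} := [set v in H | (d <= (nbrs e H v)%:Z)%R].

Definition procedure (T : finType) (e : rel T) (t : int) (i m : nat)
  : {set T} :=
  foldl (fun H j => peel_step e (i%:Z - j%:Z * t)%R H) [set: T] (iota 0 m.+1).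

(* Write t = -s with s > 0, so the peeling thresholds are i, i + s, ..., i + m s = k
   and a vertex of G_r needs r neighbours in G_(r - s).  Unwinding the D-chain
   conditions along r = i, i + s, ..., i + m s shows that G_k lies inside the
   output H.  Conversely, if H is nonempty, the peeling sequence itself, with
   G_r taken to be the stage of the procedure where threshold r is first
   reached, is a D-chain of length k.  A maximal D-chain contains every D-chain
   of order t <= 0 termwise (otherwise their union would be a larger chain), so
   H is contained in G_k. *)
From HB Require Import structures.
From mathcomp Require Import all_boot all_order all_algebra.
From mathcomp Require Import zify.
Import Order.TTheory GRing.Theory Num.Theory.

Set Implicit Arguments.
Unset Strict Implicit.
Unset Printing Implicit Defensive.

Section DchainUnion.
Variables (T : finType) (e : rel T).

Lemma nbrsS (A B : {set T}) v : A \subset B -> nbrs e A v <= nbrs e B v.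
Proof.
move=> sAB; apply: subset_leq_card; apply/subsetP => u; rewrite !inE.
by case/andP => /(subsetP sAB) -> ->.
Qed.

Lemma didx_le (t : int) r : (t <= 0)%R -> didx t r <= r.
Proof. by rewrite /didx; lia. Qed.

Lemma Dchain_subset t len c a b :
  Dchain e t len c -> a <= b <= len -> c b \subset c a.
Proof.
case=> _ c_mono _ _ /andP[]; elim: b => [|b IH]; first by rewrite leqn0 => /eqP ->.
rewrite leq_eqVlt => /orP[/eqP -> //|]; rewrite ltnS => le_ab le_b_len.
by apply: subset_trans (IH le_ab (ltnW le_b_len)); apply: c_mono; rewrite /= le_b_len.
Qed.

Definition chain_union (L : nat) (c c' : nat -> {set T}) (r : nat) : {set T} :=
  if r <= L then c r :|: c' r else c r.

Lemma chain_union_sub L (c c' : nat -> {set T}) r : c r \subset chain_union L c c' r.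
Proof. by rewrite /chain_union; case: ifP => _; [exact: subsetUl|]. Qed.

Lemma Dchain_union t len L c c' : (t <= 0)%R -> L <= len ->
  Dchain e t len c -> Dchain e t L c' -> Dchain e t len (chain_union L c c').
Proof.
move=> t_le0 le_L_len [c0 c_mono c_ne c_deg] [c'0 c'_mono _ c'_deg].
have sub_union := chain_union_sub L c c'.
split.
- by rewrite /chain_union /= c0 setTU.
- move=> r /andP[r_gt0 le_r_len]; rewrite {1}/chain_union; case: ifP => le_rL.
  + rewrite /chain_union (leq_trans (leq_pred r) le_rL).
    by apply: setUSS; [apply: c_mono | apply: c'_mono]; rewrite r_gt0.
  + by apply: subset_trans (sub_union _); apply: c_mono; rewrite r_gt0.
- move=> r le_r_len; apply: contraNneq (c_ne r le_r_len) => cu0.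
  by rewrite -subset0 -cu0.
- move=> r le_r_len v; rewrite {1}/chain_union.
  have le_rt_r : didx t r <= r := didx_le r t_le0.
  case: ifP => [le_rL | _]; last first.
    by move=> /(c_deg r le_r_len v) /leq_trans; apply; apply: nbrsS.
  case/setUP => [/(c_deg r le_r_len v) | /(c'_deg r le_rL v)] /leq_trans; apply.
    exact: nbrsS.
  by apply: nbrsS; rewrite /chain_union (leq_trans le_rt_r le_rL) subsetUr.
Qed.

Lemma maximal_Dchain_sup t len c L c' : (t <= 0)%R ->
  maximal_Dchain e t len c -> Dchain e t L c' ->
  forall r, r <= L -> c' r \subset c r.
Proof.
move=> t_le0 [cD longest maximal] c'D [|r] le_rL.
  by case: cD => -> _ _ _; apply: subsetT.
have le_L_len := longest _ _ c'D.
have cuD := Dchain_union t_le0 le_L_len cD c'D.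
have c_eq : c r.+1 = chain_union L c c' r.+1.
  apply/eqP; apply: contraT => c_neq; case: (maximal _ cuD); exists r.+1.
  by rewrite properEneq c_neq chain_union_sub (leq_trans le_rL le_L_len).
by rewrite c_eq /chain_union le_rL subsetUr.
Qed.

End DchainUnion.

Section Peeling.
Variables (T : finType) (e : rel T) (i s : nat).

Definition peel (d : nat) (H : {set T}) : {set T} :=
  [set v in H | d <= nbrs e H v].

Fixpoint peeling (j : nat) : {set T} :=
  if j is j'.+1 then peel (i + j * s) (peeling j') else peel i [set: T].

Lemma peeling_subset a b : a <= b -> peeling b \subset peeling a.
Proof.
elim: b => [|b IH]; first by rewrite leqn0 => /eqP ->.
rewrite leq_eqVlt => /orP[/eqP -> //|]; rewrite ltnS => /IH.
by apply: subset_trans; apply/subsetP => v; rewrite inE => /andP[].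
Qed.

Lemma procedureE m : procedure e (- s%:Z) i m = peeling m.
Proof.
have peel_stepE j H : peel_step e (i%:Z - j%:Z * - s%:Z)%R H = peel (i + j * s) H.
  by apply/setP => v; rewrite !inE; congr (_ && _); lia.
rewrite /procedure; elim: m => [|m IH]; first by rewrite /= peel_stepE addn0.
by rewrite -addn1 iotaD foldl_cat IH /= peel_stepE.
Qed.

Lemma didx_opp r : didx (- s%:Z) r = r - s.
Proof. by rewrite /didx; lia. Qed.

Hypothesis i_le_s : i <= s.

Lemma Dchain_sub_peeling len c : Dchain e (- s%:Z) len c ->
  forall j, i + j * s <= len -> c (i + j * s) \subset peeling j.
Proof.
move=> cD; have [c0 _ _ c_deg] := cD.
elim=> [|j IH] le_len; apply/subsetP => v v_in; rewrite inE.
  rewrite mul0n addn0 in le_len v_in *; rewrite in_setT -c0.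
  by have := c_deg i le_len v v_in; rewrite didx_opp (_ : i - s = 0); lia.
have le_len' : i + j * s <= len by lia.
have sub_j : c (i + j.+1 * s) \subset c (i + j * s).
  by apply: Dchain_subset cD _; lia.
rewrite (subsetP (subset_trans sub_j (IH le_len')) v v_in) /=.
have := c_deg _ le_len v v_in; rewrite didx_opp (_ : _ - s = i + j * s); last lia.
by move/leq_trans; apply; apply: nbrsS; apply: IH.
Qed.

Hypothesis s_gt0 : 0 < s.

Lemma peeling_level_ex r : exists j, r <= i + j * s.
Proof. by exists r; rewrite (leq_trans (leq_pmulr r s_gt0)) ?leq_addl. Qed.

Definition peeling_level (r : nat) : nat := ex_minn (peeling_level_ex r).

Lemma peeling_levelP r : r <= i + peeling_level r * s.
Proof. by rewrite /peeling_level; case: ex_minnP. Qed.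

Lemma peeling_level_min r j : r <= i + j * s -> peeling_level r <= j.
Proof. by rewrite /peeling_level; case: ex_minnP => l _; apply. Qed.

Definition peeling_chain (r : nat) : {set T} :=
  if r == 0 then [set: T] else peeling (peeling_level r).

Lemma peeling_sub_chain m r : r <= i + m * s -> peeling m \subset peeling_chain r.
Proof.
rewrite /peeling_chain; case: ifP => _ le_r; first exact: subsetT.
exact/peeling_subset/peeling_level_min.
Qed.

Lemma peeling_chain_Dchain m : peeling m != set0 ->
  Dchain e (- s%:Z) (i + m * s) peeling_chain.
Proof.
move=> peeling_ne; split => //.
- case=> // r _; rewrite /peeling_chain /=; case: ifP => _; first exact: subsetT.
  exact/peeling_subset/peeling_level_min/(leq_trans _ (peeling_levelP r.+1)).
- move=> r /peeling_sub_chain sub; apply: contraNneq peeling_ne => chain0.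
  by rewrite -subset0 -chain0.
- move=> r _ v; rewrite didx_opp /peeling_chain; case: ifP => [/eqP -> //|_].
  have le_r := peeling_levelP r.
  case: (peeling_level r) le_r => [|j] le_r /=; rewrite inE => /andP[_].
    by rewrite (_ : r - s = 0) /=; lia.
  move/(leq_trans le_r)/leq_trans; apply; apply: nbrsS.
  case: ifP => _; first exact: subsetT.
  by apply/peeling_subset/peeling_level_min; lia.
Qed.

End Peeling.

Local Open Scope ring_scope.

Theorem theorem1 (T : finType) (e : rel T) (e_sym : symmetric e)
    (e_irr : irreflexive e) (t : int) (k : nat) (i m : nat)
    (ht : (t < 0)%R) (hk : (0 < k)%N) (hi1 : (1 <= i)%N) (hi2 : (i%:Z <= - t)%R)
    (hkim : k%:Z = (i%:Z - m%:Z * t)%R)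
    (len : nat) (c : nat -> {set T}) (hmax : maximal_Dchain e t len c) :
  procedure e t i m = chain_at len c k.
Proof.
have [s s_gt0 t_def] : exists2 s : nat, (0 < s)%N & t = - s%:Z.
  by exists `|t|%N; lia.
subst t; have i_le_s : (i <= s)%N by lia.
have k_def : k = (i + m * s)%N by lia.
have [cD longest _] := hmax.
have c_sub_peeling : (k <= len)%N -> c k \subset peeling e i s m.
  by rewrite k_def; apply: Dchain_sub_peeling.
rewrite procedureE /chain_at.
have [peeling0 | peeling_ne] := eqVneq (peeling e i s m) set0.
  case: ifP => // le_k_len; case: cD => _ _ /(_ k le_k_len)/negP[].
  by rewrite -subset0 -peeling0 c_sub_peeling.
have chainD := peeling_chain_Dchain i_le_s s_gt0 peeling_ne.
have le_k_len : (k <= len)%N by rewrite k_def; apply: longest chainD.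
rewrite le_k_len; apply/eqP; rewrite eqEsubset c_sub_peeling // andbT.
rewrite k_def; apply: subset_trans (peeling_sub_chain e s_gt0 (leqnn _)) _.
by apply: maximal_Dchain_sup hmax chainD _ (leqnn _); lia.
Qed.
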